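(* Fix $n \ge n_0$ where $n_0$ is a sufficiently large universal constant. For $G=(L\cup R,E)$ drawn uniformly from $\mathcal{G}_{2n}$, with probability at least $1 - \frac{1}{n^2}$, we have $|E(B, A)| \ge \frac{1}{4} |B| |A|$ for every $A \subseteq L$ and $B \subseteq R$ satisfying $|A|, |B| \ge \frac{n}{8}$.
   Context: Fix disjoint vertex sets $L,R$ with $|L|=|R|=n$ and a fixed perfect matching $M$ of directed edges from $L$ to $R$. $\mathcal{G}_{2n}$ is the set of all unweighted directed graphs on vertex set $L\cup R$ whose set of edges from $L$ to $R$ is exactly $M$, whose edges from $R$ to $L$ form an arbitrary subset of $R\times L$, and which have no other edges. $E(B,A)$ is the set of edges from $B$ to $A$. *)

From mathcomp Require Import all_boot all_order all_algebra.
Set Implicit Arguments. Unset Strict Implicit. Unset Printing Implicit Defensive.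

(* Vertex set L ∪ R: L = inl 'I_n, R = inr 'I_n (disjoint, each of size n). *)
Definition vert (n : nat) : finType := ('I_n + 'I_n)%type.

(* A directed graph on vert n is given by its set of directed edges (u, v). *)
Definition Lset n (A : {set 'I_n}) : {set vert n} := [set (inl a : vert n) | a in A].
Definition Rset n (B : {set 'I_n}) : {set vert n} := [set (inr b : vert n) | b in B].

Definition matchM n : {set vert n * vert n} :=
  [set ((inl i : vert n), (inr i : vert n)) | i : 'I_n].

Definition Eset n (E : {set vert n * vert n}) (X Y : {set vert n})
  : {set vert n * vert n} := [set e in E | (e.1 \in X) && (e.2 \in Y)].

Definition is_in_G n (E : {set vert n * vert n}) : bool :=
  [&& Eset E (Lset setT) (Rset setT) == matchM n,
      Eset E (Lset setT) (Lset setT) == set0 &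
      Eset E (Rset setT) (Rset setT) == set0].

Definition classG n : {set {set vert n * vert n}} := [set E | is_in_G E].

Definition good_graph n (E : {set vert n * vert n}) : bool :=
  [forall A : {set 'I_n}, forall B : {set 'I_n},
     ((n <= 8 * #|A|) && (n <= 8 * #|B|)) ==>
     (#|B| * #|A| <= 4 * #|Eset E (Rset B) (Lset A)|)]%N.

Definition prob_good n : rat :=
  (#|[set E in classG n | good_graph E]|%:R / #|classG n|%:R)%R.

From mathcomp Require Import all_boot all_order all_algebra.
From mathcomp Require Import zify lra.
Set Implicit Arguments. Unset Strict Implicit. Unset Printing Implicit Defensive.
Import GRing.Theory Num.Theory.

(* A graph of the class is M together with an arbitrary set S of back edges,
   so S is a uniform subset of R x L.  Fix A, B with |A|, |B| >= n/8; the graph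
   is bad for (A, B) iff S meets the m = |B||A| >= n^2/64 pairs of B x A in
   fewer than m/4 of them.  Giving each subset T of these pairs the weight
   2^(m - |T|), the total weight is 3^m while every sparse T weighs at least
   2^(3m/4), so at most a fraction 3^m / 2^(2m - m/4) <= (0.9)^m of the graphs
   is bad for (A, B).  For n >= 4096 this is below 1/(n^2 4^n), and a union
   bound over the at most 4^n pairs (A, B) concludes. *)

Lemma sqrn_le_exp4 n : n ^ 2 <= 4 ^ n.
Proof. by rewrite (_ : 4 = 2 ^ 2) // -expnM mulnC expnM leq_sqr ltnW // ltn_expl. Qed.

Lemma sqrn_exp4_exp2_le_exp3 n q : 8 * n <= q -> n ^ 2 * 4 ^ n * 2 ^ q <= 3 ^ q.
Proof.
move=> /subnKC <-; elim: (q - 8 * n) => [|d IH].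
  rewrite addn0 !expnM; apply: (@leq_trans (4 ^ n * 4 ^ n * 256 ^ n)).
    by rewrite leq_mul2r leq_mul2r sqrn_le_exp4 !orbT.
  by rewrite -!expnMn; case: n => [|n]; rewrite ?expn0 ?leq_exp2r.
by rewrite addnS (expnS 2) (expnS 3) mulnCA leq_mul.
Qed.

Lemma sqrn_exp4_exp3_le_exp2 n m : 4096 <= n -> n ^ 2 <= 64 * m ->
  n ^ 2 * 4 ^ n * 3 ^ m <= 2 ^ (m + (m - m %/ 4)).
Proof.
move=> n_large m_large; set q := m %/ 4; set r := m %% 4.
have q_large : 8 * n <= q by rewrite /q leq_divRL //; nia.
have -> : 3 ^ m = 81 ^ q * 3 ^ r by rewrite {1}(divn_eq m 4) -/q -/r expnD (mulnC q) expnM.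
have -> : 2 ^ (m + (m - q)) = 128 ^ q * 4 ^ r.
  rewrite (_ : 128 = 2 ^ 7) // (_ : 4 = 2 ^ 2) // -!expnM -expnD.
  by congr (_ ^ _); rewrite /q /r {1}(divn_eq m 4); lia.
rewrite mulnA leq_mul //; last by case: (r) => // r'; rewrite leq_exp2r.
rewrite -(@leq_pmul2r (2 ^ q)) ?expn_gt0 //.
apply: (@leq_trans (3 ^ q * 81 ^ q)).
  by rewrite mulnAC leq_mul2r sqrn_exp4_exp2_le_exp3 ?orbT.
by rewrite -!expnMn; case: (q) => // k; rewrite leq_exp2r.
Qed.

Section Subsets.
Variable T : finType.
Implicit Types U W : {set T}.

Lemma sum_powerset_exp2_card_compl W : \sum_(S in powerset W) 2 ^ (#|W| - #|S|) = 3 ^ #|W|.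
Proof.
rewrite (partition_big (fun S : {set T} => inord #|S| : 'I_#|W|.+1) xpredT) //=.
rewrite (_ : 3 = 2 + 1) // expnDn; apply: eq_bigr => k _.
have card_le S : S \in powerset W -> #|S| < #|W|.+1.
  by rewrite inE ltnS => /subset_leq_card.
rewrite (eq_bigr (fun _ => 2 ^ (#|W| - k))); last first.
  by move=> S /andP[/card_le ? /eqP <-]; rewrite inordK.
rewrite sum_nat_const exp1n muln1 -cards_draws; congr (_ * _).
apply: eq_card => S; rewrite !inE unfold_in /=.
rewrite powersetE; case sSW: (S \subset W) => //=; rewrite -powersetE in sSW.
apply/eqP/eqP => [<-|eqSk]; first by rewrite inordK ?card_le.
by apply: val_inj; rewrite /= inordK ?card_le.
Qed.

Lemma card_sparse_subsets_mul_exp2_le W :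
  #|[set S in powerset W | 4 * #|S| < #|W|]| * 2 ^ (#|W| - #|W| %/ 4) <= 3 ^ #|W|.
Proof.
rewrite -sum_powerset_exp2_card_compl -sum1_card big_distrl /= big_mkcond [X in _ <= X]big_mkcond.
apply: leq_sum => S _; rewrite !inE; case: ifP => // /andP[-> sparse].
by rewrite mul1n leq_exp2l // leq_sub2l // leq_divRL //; lia.
Qed.

Lemma card_subsets_trace U W (P : pred {set T}) : W \subset U ->
  #|[set S in powerset U | P (S :&: W)]| = #|[set S in powerset W | P S]| * 2 ^ (#|U| - #|W|).
Proof.
move=> sWU; have card_UW : #|U :\: W| = #|U| - #|W| by rewrite cardsD (setIidPr sWU).
rewrite -card_UW -card_powerset -cardsX.
rewrite -(@card_in_imset _ _ (fun S => (S :&: W, S :\: W))); last first.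
  by move=> S1 S2 _ _ [eqI eqD]; rewrite -(setID S1 W) -(setID S2 W) eqI eqD.
apply: eq_card => -[T1 T2]; rewrite !inE /=; apply/imsetP/andP => /=.
  move=> [S]; rewrite !inE => /andP[sSU PS] [-> ->].
  by rewrite PS subsetIr setSD.
move=> [/andP[sT1W PT1] sT2UW].
have dT2W : [disjoint T2 & W].
  by rewrite disjoints_subset (subset_trans sT2UW) // setDE subsetIr.
have traceI : (T1 :|: T2) :&: W = T1.
  by rewrite setIUl (setIidPl sT1W) (disjoint_setI0 dT2W) setU0.
have traceD : (T1 :|: T2) :\: W = T2.
  by rewrite setDUl (setDidPl dT2W) (eqP (_ : T1 :\: W == set0)) ?set0U ?setD_eq0.
exists (T1 :|: T2); last by rewrite traceI traceD.
rewrite !inE traceI PT1 andbT subUset (subset_trans sT1W sWU).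
by rewrite (subset_trans sT2UW) ?subsetDl.
Qed.

Lemma sqrn_exp4_card_sparse_subsets_le n W : 4096 <= n -> n ^ 2 <= 64 * #|W| ->
  n ^ 2 * 4 ^ n * #|[set S in powerset W | 4 * #|S| < #|W|]| <= 2 ^ #|W|.
Proof.
move=> n_large W_large; rewrite -(@leq_pmul2r (2 ^ (#|W| - #|W| %/ 4))) ?expn_gt0 //.
rewrite -mulnA -expnD; apply: leq_trans (sqrn_exp4_exp3_le_exp2 n_large W_large).
by rewrite leq_mul2l card_sparse_subsets_mul_exp2_le orbT.
Qed.

Lemma leq_card_bigcup (I : finType) (P : pred I) (F : I -> {set T}) :
  #|\bigcup_(i | P i) F i| <= \sum_(i | P i) #|F i|.
Proof.
apply: (big_ind2 (fun (X : {set T}) k => #|X| <= k)) => [|X x Y y leX leY|//].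
  by rewrite cards0.
exact: leq_trans (leq_card_setU X Y).1 (leq_add leX leY).
Qed.

End Subsets.

Section Bipartite.
Variable n : nat.
Implicit Types (A B : {set 'I_n}) (E S : {set vert n * vert n}).

Lemma mem_Lset A (x : vert n) : (x \in Lset A) = if x is inl a then a \in A else false.
Proof. by case: x => a; [rewrite mem_imset // => ? ? [] | apply/imsetP => -[]]. Qed.

Lemma mem_Rset B (x : vert n) : (x \in Rset B) = if x is inr b then b \in B else false.
Proof. by case: x => b; [apply/imsetP => -[] | rewrite mem_imset // => ? ? []]. Qed.

Lemma card_Lset A : #|Lset A| = #|A|.
Proof. by rewrite card_imset // => ? ? []. Qed.

Lemma card_Rset B : #|Rset B| = #|B|.
Proof. by rewrite card_imset // => ? ? []. Qed.

Lemma mem_matchM (x y : vert n) :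
  ((x, y) \in matchM n) = if (x, y) is (inl i, inr j) then i == j else false.
Proof.
apply/imsetP; case: x y => i [j|j] /=; try by case.
case: eqVneq => [-> | neq_ij]; first by exists j.
by case=> k _ [eik ejk]; rewrite eik ejk eqxx in neq_ij.
Qed.

Definition back_edges : {set vert n * vert n} := setX (Rset setT) (Lset setT).

Definition add_matching S := S :|: matchM n.

Lemma EsetE E X Y : Eset E X Y = E :&: setX X Y.
Proof. by apply/setP => e; rewrite !inE. Qed.

Lemma matchM_back_edges_disjoint : [disjoint matchM n & back_edges].
Proof.
rewrite -setI_eq0; apply/eqP/setP => -[x y].
by rewrite !inE /= mem_matchM mem_Lset mem_Rset; case: x y => ? [] ?; rewrite ?andbF.
Qed.

Lemma add_matchingI S (W : {set vert n * vert n}) :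
  W \subset back_edges -> add_matching S :&: W = S :&: W.
Proof.
move=> sWU; have /disjoint_setI0 MW : [disjoint matchM n & W].
  exact: disjointWr sWU matchM_back_edges_disjoint.
by rewrite setIUl MW setU0.
Qed.

Lemma classG_add_matching : classG n = add_matching @: powerset back_edges.
Proof.
apply/setP => E; rewrite inE; apply/idP/imsetP => [/and3P[/eqP LR /eqP LL /eqP RR] | [S]].
  exists (E :&: back_edges); first by rewrite inE subsetIr.
  apply/setP => -[x y]; move: LR LL RR.
  move=> /setP/(_ (x, y)) + /setP/(_ (x, y)) + /setP/(_ (x, y)).
  rewrite !inE /= mem_matchM !mem_Lset !mem_Rset.
  by case: x y => ? [?|?]; rewrite /= ?inE ?andbT ?andbF ?orbF ?orFb.
rewrite inE => sSU ->; rewrite /add_matching -(setIidPl sSU).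
apply/and3P; split; apply/eqP/setP => -[x y];
  rewrite !inE /= mem_matchM !mem_Lset !mem_Rset;
  by case: x y => ? [?|?]; rewrite /= ?inE ?andbT ?andbF ?orbF ?orFb.
Qed.

Lemma add_matchingK :
  {in powerset back_edges, cancel add_matching (fun E => E :&: back_edges)}.
Proof. by move=> S; rewrite inE => sSU; rewrite add_matchingI // (setIidPl sSU). Qed.

Lemma card_classG : #|classG n| = 2 ^ #|back_edges|.
Proof.
by rewrite classG_add_matching card_in_imset ?card_powerset //; exact: can_in_inj add_matchingK.
Qed.

Lemma card_sparse_cut_graphs A B : 4096 <= n -> n <= 8 * #|A| -> n <= 8 * #|B| ->
  n ^ 2 * 4 ^ n * #|[set E in classG n | 4 * #|Eset E (Rset B) (Lset A)| < #|B| * #|A|]|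
  <= #|classG n|.
Proof.
move=> n_large A_large B_large; set W := setX (Rset B) (Lset A).
have sWU : W \subset back_edges by rewrite setXS // imsetS ?subsetT.
have cardW : #|W| = #|B| * #|A| by rewrite cardsX card_Lset card_Rset.
have -> : [set E in classG n | 4 * #|Eset E (Rset B) (Lset A)| < #|B| * #|A|] =
    add_matching @: [set S in powerset back_edges | 4 * #|S :&: W| < #|W|].
  apply/setP => E; rewrite inE classG_add_matching -cardW.
  apply/andP/imsetP => [[/imsetP[S sSU ->]] | [S]].
    by rewrite EsetE add_matchingI // => sparse; exists S; rewrite // inE sSU.
  by rewrite inE => /andP[sSU sparse] ->; rewrite imset_f // EsetE add_matchingI.
rewrite card_in_imset; last first.
  by apply: sub_in2 (can_in_inj add_matchingK) => S; rewrite inE => /andP[].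
rewrite (card_subsets_trace (fun S => 4 * #|S| < #|W|) sWU) card_classG.
rewrite -{2}(subnKC (subset_leq_card sWU)) expnD.
by rewrite mulnA leq_mul2r sqrn_exp4_card_sparse_subsets_le ?orbT // cardW; nia.
Qed.

Lemma card_bad_graphs : 4096 <= n ->
  n ^ 2 * #|classG n :\: [set E | good_graph E]| <= #|classG n|.
Proof.
move=> n_large.
pose large (p : {set 'I_n} * {set 'I_n}) := (n <= 8 * #|p.1|) && (n <= 8 * #|p.2|).
pose sparse_cut (p : {set 'I_n} * {set 'I_n}) :=
  [set E in classG n | 4 * #|Eset E (Rset p.2) (Lset p.1)| < #|p.2| * #|p.1|].
have bad_sub : classG n :\: [set E | good_graph E] \subset \bigcup_(p | large p) sparse_cut p.
  apply/subsetP => E; rewrite !inE => /andP[/forallPn[A /forallPn[B]]].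
  rewrite negb_imply -ltnNge => /andP[AB_large sparse] G_E.
  by apply/bigcupP; exists (A, B); rewrite // /sparse_cut !inE G_E.
have card_pairs : #|{: {set 'I_n} * {set 'I_n}}| = 4 ^ n.
  by rewrite card_prod -cardsT -powersetT card_powerset cardsT card_ord -expnMn.
rewrite -(@leq_pmul2l (4 ^ n)) ?expn_gt0 // mulnA [4 ^ n * _]mulnC.
apply: leq_trans (leq_mul (leqnn _) (subset_leq_card bad_sub)) _.
apply: leq_trans (leq_mul (leqnn _) (leq_card_bigcup _ _)) _.
rewrite big_distrr /=; apply: leq_trans (_ : \sum_(p | large p) #|classG n| <= _).
  by apply: leq_sum => p /andP[A_large B_large]; exact: card_sparse_cut_graphs.
by rewrite sum_nat_const -card_pairs leq_mul2r max_card orbT.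
Qed.

End Bipartite.

Lemma one_sub_inv_le_ratio (R : realFieldType) (g b N : nat) : 0 < N -> 0 < g + b ->
  N * b <= g + b -> (1 - 1 / N%:R <= g%:R / (g + b)%:R :> R)%R.
Proof.
rewrite -!(ltr0n R) -(ler_nat R) !natrD natrM => N_gt0 gb_gt0 Nb_le.
have b_le : (b%:R <= (g%:R + b%:R) / N%:R :> R)%R by rewrite ler_pdivlMr // mulrC.
rewrite ler_pdivlMr // mulrBl !mul1r [(_^-1 * _)%R]mulrC; lra.
Qed.

Theorem lemma9 : exists n0 : nat, forall n : nat, (n0 <= n)%N ->
  (1 - 1 / (n ^ 2)%:R <= prob_good n)%R.
Proof.
exists 4096 => n n_large; rewrite /prob_good.
have bad_bound := card_bad_graphs n_large.
rewrite -(cardsID [set E | good_graph E] (classG n)) -setIdE in bad_bound *.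
apply: one_sub_inv_le_ratio bad_bound; first by rewrite expn_gt0; lia.
by rewrite setIdE cardsID card_classG expn_gt0.
Qed.
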